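(* Let $\Gamma=(V,m,\tau)$ be a weak $W$-graph and let $A\subseteq\Delta$. Then the kernel of the operator $Q(A)=\frac{1}{|W(A)|}\sum_{g\in W(A)}g$ acting on $\mathbb{C}V$ is exactly the span of $V(A,-)\cup V(A,0)$.
   Context: $W$ is a Weyl group with a fixed set $\Delta$ of simple roots; for a root $\alpha$, $s_\alpha$ is the reflection in the hyperplane orthogonal to $\alpha$. A weak $W$-graph is a triple $\Gamma=(V,m,\tau)$ where $V$ is a finite set, $m:V\times V\to\mathbb{C}$ is a map, and $\tau$ is a map from $V$ to the power set of $\Delta$, such that the linear maps $s_\alpha:\mathbb{C}V\to\mathbb{C}V$ ($\alpha\in\Delta$) given on basis vectors by $s_\alpha(v)=-v$ if $\alpha\in\tau(v)$ and $s_\alpha(v)=v-\sum_{u\in V,\ \alpha\in\tau(u)} m(u,v)u$ if $\alpha\notin\tau(v)$ define a representation of $W$ on $\mathbb{C}V$. For $A\subseteq\Delta$, $W(A)$ is the subgroup of $W$ generated by $\{s_\alpha:\alpha\in A\}$, and $V(A,-)=\{v\in V: A\subseteq\tau(v)\}$, $V(A,0)=\{v\in V: A\cap\tau(v)\neq\emptyset,\ A\not\subseteq\tau(v)\}$. *)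

From HB Require Import structures.
From mathcomp Require Import all_boot all_order all_algebra all_fingroup.
From mathcomp Require Import mxrepresentation.
From mathcomp Require Import complex.
From mathcomp Require Import Rstruct.
From Stdlib Require Import Reals.
Set Implicit Arguments. Unset Strict Implicit. Unset Printing Implicit Defensive.
Import Order.TTheory GRing.Theory Num.Theory.
Local Open Scope ring_scope.

Notation RE := Rdefinitions.R.
Notation CC := (Rdefinitions.R[i]).

Definition dotv n (x y : 'rV[RE]_n) : RE := (x *m y^T) 0 0.

Definition refl_vec n (a x : 'rV[RE]_n) : 'rV[RE]_n :=
  x - ((2 * dotv x a) / dotv a a) *: a.

(* matrix of that reflection, acting on row vectors: x *m refl_mx a = refl_vec a x *)
Definition refl_mx n (a : 'rV[RE]_n) : 'M[RE]_n :=
  1%:M - ((2 / dotv a a) *: (a^T *m a)).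

(* A (reduced, crystallographic) root system in 'rV[RE]_n, listed without repetition. *)
Definition is_root_system n (Phi : seq 'rV[RE]_n) : Prop :=
  [/\ uniq Phi /\ 0 \notin Phi,
      row_full (\matrix_(i < size Phi) nth 0 Phi i),
      {in Phi &, forall a b, refl_vec a b \in Phi},
      {in Phi &, forall a b, exists z : int, 2 * dotv b a / dotv a a = z%:~R}
    & {in Phi, forall a (c : RE), c *: a \in Phi -> c = 1 \/ c = -1}].

(* delta : 'I_l -> 'rV_n enumerates a base (set of simple roots) Delta of Phi. *)
Definition is_base n l (Phi : seq 'rV[RE]_n) (delta : 'I_l -> 'rV[RE]_n) : Prop :=
  [/\ injective delta, forall i, delta i \in Phi,
      row_free (\matrix_(i < l) delta i)
    & {in Phi, forall b, exists c : 'I_l -> int,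
         b = \sum_(i < l) (c i)%:~R *: delta i /\
         ((forall i, 0 <= c i) \/ (forall i, c i <= 0))}].

(* W (a finite group) is, via act, isomorphic to the Weyl group of Phi, i.e. the
   group generated by all reflections s_a (a in Phi); s i is the simple
   reflection s_(delta i). *)
Definition weyl_realization n l (Phi : seq 'rV[RE]_n) (delta : 'I_l -> 'rV[RE]_n)
  (gT : finGroupType) (W : {group gT}) (s : 'I_l -> gT) (act : gT -> 'M[RE]_n) : Prop :=
  [/\ {in W &, injective act},
      {in W &, {morph act : x y / (x * y)%g >-> x *m y}},
      (forall i, s i \in W /\ act (s i) = refl_mx (delta i))
    & exists r : seq gT, (W :=: <<[set g in r]>>)%g /\ map act r = map (@refl_mx n) Phi].

Definition WA (gT : finGroupType) l (s : 'I_l -> gT) (A : {set 'I_l}) : {set gT} :=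
  <<s @: A>>%g.

Section WGraph.
Variables (V : finType) (l : nat).

Definition bvec (v : V) : 'cV[CC]_#|V| := delta_mx (enum_rank v) 0.

(* matrix (acting on column vectors) of the linear map s_alpha on CV:
   column v is s_alpha(v) *)
Definition Smx (m : V -> V -> CC) (tau : V -> {set 'I_l}) (al : 'I_l) : 'M[CC]_#|V| :=
  \matrix_(i, j)
    let u := enum_val i in let v := enum_val j in
    if al \in tau v then (if u == v then -1 else 0)
    else (u == v)%:R - (if al \in tau u then m u v else 0).

(* rho is the representation of W on CV given by the weak W-graph (V,m,tau):
   a group homomorphism W -> GL(CV) with rho(s_alpha) = the map s_alpha above.
   (V,m,tau) is a weak W-graph iff such a rho exists; it is then unique. *)
Definition weak_W_graph_repr (gT : finGroupType) (W : {group gT}) (s : 'I_l -> gT)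
  (m : V -> V -> CC) (tau : V -> {set 'I_l}) (rho : gT -> 'M[CC]_#|V|) : Prop :=
  mx_repr W rho /\ forall al, rho (s al) = Smx m tau al.

Definition VAminus (tau : V -> {set 'I_l}) (A : {set 'I_l}) : {set V} :=
  [set v | A \subset tau v].

Definition VAzero (tau : V -> {set 'I_l}) (A : {set 'I_l}) : {set V} :=
  [set v | (A :&: tau v != set0) && ~~ (A \subset tau v)].

Definition QA (gT : finGroupType) (s : 'I_l -> gT) (rho : gT -> 'M[CC]_#|V|)
  (A : {set 'I_l}) : 'M[CC]_#|V| :=
  (#|WA s A|%:R)^-1 *: \sum_(g in WA s A) rho g.

Definition in_span (S : {set V}) (x : 'cV[CC]_#|V|) : Prop :=
  exists c : V -> CC, x = \sum_(v in S) c v *: bvec v.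

End WGraph.

From HB Require Import structures.
From mathcomp Require Import all_boot all_order all_algebra all_fingroup.
From mathcomp Require Import mxrepresentation complex Rstruct.
From Stdlib Require Import Reals.
Import Order.TTheory GRing.Theory Num.Theory.
Local Open Scope ring_scope.
Set Implicit Arguments. Unset Strict Implicit.

(* Let Q be the average of rho over W(A), and S = V(A,-) u V(A,0), the set of
   basis vectors v with A meeting tau(v).  If v is in S and al is in A and in
   tau(v), then s_al v = -v while Q s_al = Q, so Q v = 0.  Conversely, for al
   in A the matrix of s_al acts trivially on every coordinate u outside S
   (there al is not in tau(u)), so the coordinate projection P killing S
   satisfies P s_al = P.  Then P g = P for all g in W(A), hence P Q = P, and
   Q x = 0 gives P x = 0, i.e. x lies in the span of S. *)

Section Averaging.
Variables (F : numFieldType) (gT : finGroupType) (G H : {group gT}) (n : nat).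
Variable rG : mx_representation F G n.
Hypothesis sHG : H \subset G.

Definition avg_mx : 'M[F]_n := (#|H|%:R)^-1 *: \sum_(g in H) rG g.

Lemma avg_mxMr h : h \in H -> avg_mx *m rG h = avg_mx.
Proof.
move=> Hh; rewrite /avg_mx -scalemxAl mulmx_suml; congr (_ *: _).
rewrite [RHS](reindex_inj (mulIg h)) /=; apply: eq_big => [g|g Hg].
  by rewrite groupMr.
by rewrite repr_mxM ?(subsetP sHG).
Qed.

Lemma mulmx_avg_stab m (U : 'M_(m, n)) : H \subset rstab rG U -> U *m avg_mx = U.
Proof.
move=> /subsetP stabU; rewrite /avg_mx -scalemxAr mulmx_sumr.
rewrite (eq_bigr (fun=> U)) => [|g /stabU]; last by rewrite inE => /andP[_ /eqP].
rewrite sumr_const -scaler_nat scalerA mulVf ?scale1r //.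
by rewrite pnatr_eq0 -lt0n cardG_gt0.
Qed.

Lemma avg_mx_anti_fixed h (y : 'cV_n) : h \in H -> rG h *m y = - y -> avg_mx *m y = 0.
Proof.
move=> Hh anti_y; have : avg_mx *m y = - (avg_mx *m y).
  by rewrite -{1}(avg_mxMr Hh) -mulmxA anti_y mulmxN.
by move/eqP; rewrite -addr_eq0 -mulr2n -scaler_nat scaler_eq0 pnatr_eq0 => /eqP.
Qed.

End Averaging.

Section WGraphOperators.
Variables (V : finType) (l : nat) (m : V -> V -> CC) (tau : V -> {set 'I_l}).

Definition proj_compl_mx (S : {set V}) : 'M[CC]_#|V| :=
  diag_mx (\row_i (enum_val i \notin S)%:R).

Lemma proj_compl_in_span (S : {set V}) x : proj_compl_mx S *m x = 0 -> in_span S x.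
Proof.
move=> Px0; exists (fun v => x (enum_rank v) 0).
apply/matrixP => i j; rewrite !ord1 summxE.
under eq_bigr => v _.
  rewrite !mxE andbT -[i in i == _]enum_valK (inj_eq enum_rank_inj) eq_sym.
  over.
have [iS|iS] := boolP (enum_val i \in S).
  rewrite (bigD1 (enum_val i)) //= eqxx mulr1 enum_valK big1 ?addr0 //.
  by move=> v /andP[_ /negbTE ->]; rewrite mulr0.
rewrite big1 => [|v vS]; last by case: eqP vS iS => [->->|_] //; rewrite mulr0.
by move/matrixP/(_ i 0): Px0; rewrite mul_diag_mx !mxE iS mul1r.
Qed.

Lemma Smx_bvec al v : al \in tau v -> Smx m tau al *m bvec v = - bvec v.
Proof.
move=> hal; rewrite /bvec -colE; apply/matrixP => i j.
rewrite ord1 !mxE /= enum_rankK hal andbT.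
case: eqP => [<-|ne]; first by rewrite enum_valK eqxx.
case: (i =P enum_rank v) => [e|]; last by rewrite mulr0n oppr0.
by case: ne; rewrite e enum_rankK.
Qed.

Lemma proj_compl_Smx (S : {set V}) al :
  (forall u, u \notin S -> al \notin tau u) ->
  proj_compl_mx S *m Smx m tau al = proj_compl_mx S.
Proof.
move=> outS; apply/matrixP => i j; rewrite mul_diag_mx !mxE /=.
have [iS|/outS al_i] := boolP (enum_val i \in S); first by rewrite mul0r mul0rn.
rewrite mul1r (negbTE al_i) subr0 (inj_eq enum_val_inj).
by case: eqVneq => [<-|_]; rewrite ?(negbTE al_i) //; case: ifP.
Qed.

Lemma mem_VAminus_zero A v : A != set0 ->
  (v \in VAminus tau A :|: VAzero tau A) = (A :&: tau v != set0).
Proof.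
move=> A0; rewrite !inE; have [/setIidPl -> //|_] := boolP (A \subset tau v).
by rewrite andbT.
Qed.

End WGraphOperators.

Theorem proposition2p6
  (n l : nat) (Phi : seq 'rV[RE]_n) (delta : 'I_l -> 'rV[RE]_n)
  (gT : finGroupType) (W : {group gT}) (s : 'I_l -> gT) (act : gT -> 'M[RE]_n)
  (HPhi : is_root_system Phi) (HDelta : is_base Phi delta)
  (HW : weyl_realization Phi delta W s act)
  (V : finType) (m : V -> V -> CC) (tau : V -> {set 'I_l})
  (rho : gT -> 'M[CC]_#|V|) (Hrho : weak_W_graph_repr W s m tau rho)
  (A : {set 'I_l}) (HA : A != set0) :
  forall x : 'cV[CC]_#|V|,
    QA s rho A *m x = 0 <-> in_span (VAminus tau A :|: VAzero tau A) x.
Proof.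
move=> x; case: Hrho => rho_repr rhoS; case: HW => _ _ sW _.
pose rG := MxRepresentation rho_repr.
pose H := [group of WA s A].
have sHW : H \subset W.
  by rewrite gen_subG; apply/subsetP => _ /imsetP[al _ ->]; case: (sW al).
have QE : QA s rho A = avg_mx H rG by [].
set S := VAminus tau A :|: VAzero tau A.
have memS v : (v \in S) = (A :&: tau v != set0) := mem_VAminus_zero tau v HA.
split => [Qx0|[c ->]].
  apply: proj_compl_in_span.
  have stabH : H \subset rstab rG (proj_compl_mx S).
    rewrite gen_subG; apply/subsetP => _ /imsetP[al Aal ->].
    rewrite inE (proj1 (sW al)) /= rhoS proj_compl_Smx // => u.
    rewrite memS; apply: contraNN => al_u; apply/set0Pn; exists al.
    by rewrite inE Aal.
  by rewrite -(mulmx_avg_stab stabH) -mulmxA -QE Qx0 mulmx0.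
rewrite mulmx_sumr big1 // => v; rewrite memS => /set0Pn[al].
rewrite inE => /andP[Aal al_v]; rewrite -scalemxAr QE.
rewrite (avg_mx_anti_fixed (rG := rG) (h := s al) sHW) ?scaler0 ?mem_gen ?imset_f //=.
by rewrite rhoS Smx_bvec.
Qed.
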